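(* Let $N\geq 2$ be an integer, let $I_0>0$, and let $0<\mu_{min}\leq\mu_{max}$ be given. For $K>0$, $\mu_1\in\mathbb{R}$ and $\varepsilon\geq 0$ define $$G_N(K,\mu_1,\varepsilon)=\frac{I_0}{K}\Big[(1+K\mu_1)^N+\big(1-K\mu_1(1+\varepsilon)\big)^N-2\Big].$$ Then for every $K>0$ there exists $\delta>0$ such that whenever $0\leq\varepsilon_{max}<\delta$, one has $G_N(K,\mu_1,\varepsilon)>0$ for all $\mu_1$ with $\mu_{min}\leq|\mu_1|\leq\mu_{max}$ and all $\varepsilon$ with $0\leq\varepsilon\leq\varepsilon_{max}$.
   Context: Interpretation: $G_N(K,\mu_1,\varepsilon)$ is the expected cumulative trading gain $\mathbb{E}[g(N)]$ after $N$ periods of a two-stock long-short linear feedback controller with initial investment $I_0$ and feedback parameter $K$, where the first stock has mean return $\mu_1$ and the second has mean return $(1+\varepsilon)\beta_0\mu_1$ with $\beta_0\neq 0$ known and $\varepsilon\in[0,\varepsilon_{max}]$ unknown. The corollary says that for any feedback parameter, positivity of the expected gain is robust once the correlation uncertainty bound $\varepsilon_{max}$ is small enough. *)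

From Stdlib Require Import Reals.
Open Scope R_scope.

(* Expected cumulative gain G_N(K, mu1, eps) of the two-stock long-short
   linear feedback controller with initial investment I0. *)
Definition G_N (N : nat) (I0 K mu1 eps : R) : R :=
  I0 / K * ((1 + K * mu1) ^ N + (1 - K * mu1 * (1 + eps)) ^ N - 2).

(* With x = K mu1, the bracket of G_N is (1+x)^N + (1-x)^N - 2 plus the effect of
   the perturbation eps.  The unperturbed part is at least N(N-1) x^2 >= 2 x^2, while
   x |-> x^N is Lipschitz on bounded sets, so the perturbation is at most L |x| eps
   for a constant L depending only on N and K mu_max.  Since |x| >= K mu_min > 0,
   any eps_max < 2 K mu_min / L keeps the bracket positive. *)

From Stdlib Require Import Reals Lra Lia Psatz.
Open Scope R_scope.

(* The even and odd parts satisfy f(n+1) = f n + x g n and x g(n+1) = x g n + x^2 f n,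
   so the two bounds must be proved together. *)
Lemma pow_1p_1m_even_odd_lower (x : R) (n : nat) :
  (1 + x) ^ n + (1 - x) ^ n >= 2 + INR n * (INR n - 1) * x ^ 2 /\
  x * ((1 + x) ^ n - (1 - x) ^ n) >= 2 * INR n * x ^ 2.
Proof.
  induction n as [|n [IHeven IHodd]].
  - simpl. split; nra.
  - assert (Heven_ge2 : (1 + x) ^ n + (1 - x) ^ n >= 2).
    { destruct n as [|n]; [simpl; lra|].
      assert (0 <= INR (S n) * (INR (S n) - 1) * x ^ 2).
      { rewrite S_INR. pose proof (pos_INR n). nra. }
      lra. }
    rewrite S_INR. simpl. split; nra.
Qed.

Lemma pow_1p_add_pow_1m_ge (x : R) (n : nat) :
  (1 + x) ^ n + (1 - x) ^ n >= 2 + INR n * (INR n - 1) * x ^ 2.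
Proof. exact (proj1 (pow_1p_1m_even_odd_lower x n)). Qed.

Lemma Rabs_pow_sub_le (a b C : R) (n : nat) :
  Rabs a <= C -> Rabs b <= C ->
  Rabs (a ^ S n - b ^ S n) <= INR (S n) * C ^ n * Rabs (a - b).
Proof.
  intros Ha Hb.
  induction n as [|n IH].
  - simpl. rewrite !Rmult_1_r, Rmult_1_l. lra.
  - replace (a ^ S (S n) - b ^ S (S n))
      with (a * (a ^ S n - b ^ S n) + b ^ S n * (a - b)) by (simpl; ring).
    assert (Hbn : Rabs (b ^ S n) <= C ^ S n).
    { rewrite <- RPow_abs. apply pow_incr. split; [apply Rabs_pos | exact Hb]. }
    assert (Hhead : Rabs a * Rabs (a ^ S n - b ^ S n)
                    <= C * (INR (S n) * C ^ n * Rabs (a - b))).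
    { apply Rmult_le_compat; try apply Rabs_pos; assumption. }
    assert (Htail : Rabs (b ^ S n) * Rabs (a - b) <= C ^ S n * Rabs (a - b)).
    { apply Rmult_le_compat_r; [apply Rabs_pos | exact Hbn]. }
    eapply Rle_trans; [apply Rabs_triang|].
    rewrite !Rabs_mult, (S_INR (S n)). simpl in *. nra.
Qed.

Lemma Rabs_pow_1m_perturb_le (x eps B : R) (m : nat) :
  Rabs x <= B -> 0 <= eps <= 1 ->
  Rabs ((1 - x * (1 + eps)) ^ S m - (1 - x) ^ S m)
    <= INR (S m) * (1 + 2 * B) ^ m * (Rabs x * eps).
Proof.
  intros Hx Heps.
  assert (Hbound : forall t, 0 <= t <= 1 -> Rabs (1 - x * (1 + t)) <= 1 + 2 * B).
  { intros t Ht. apply Rabs_le.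
    pose proof (Rle_abs x). pose proof (Rle_abs (- x)). rewrite Rabs_Ropp in *.
    split; nra. }
  replace (Rabs x * eps) with (Rabs (1 - x * (1 + eps) - (1 - x * (1 + 0)))).
  - replace (1 - x) with (1 - x * (1 + 0)) by ring.
    apply Rabs_pow_sub_le; apply Hbound; lra.
  - replace (1 - x * (1 + eps) - (1 - x * (1 + 0))) with (- (x * eps)) by ring.
    rewrite Rabs_Ropp, Rabs_mult, (Rabs_right eps) by lra. reflexivity.
Qed.

Lemma gain_bracket_pos (x eps B : R) (m : nat) :
  (1 <= m)%nat -> x <> 0 -> Rabs x <= B -> 0 <= eps <= 1 ->
  INR (S m) * (1 + 2 * B) ^ m * eps < 2 * Rabs x ->
  0 < (1 + x) ^ S m + (1 - x * (1 + eps)) ^ S m - 2.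
Proof.
  intros Hm Hx0 HxB Heps Hsmall.
  set (d := (1 - x * (1 + eps)) ^ S m - (1 - x) ^ S m).
  assert (Hd : - d <= INR (S m) * (1 + 2 * B) ^ m * (Rabs x * eps)).
  { eapply Rle_trans; [apply Rle_abs|].
    rewrite Rabs_Ropp. apply Rabs_pow_1m_perturb_le; assumption. }
  assert (Hunperturbed : (1 + x) ^ S m + (1 - x) ^ S m >= 2 + 2 * x ^ 2).
  { pose proof (pow_1p_add_pow_1m_ge x (S m)) as Hge.
    assert (Hcoef : 2 <= INR (S m) * (INR (S m) - 1)).
    { rewrite S_INR. apply le_INR in Hm. simpl in Hm. nra. }
    assert (0 <= x ^ 2) by (apply pow2_ge_0).
    nra. }
  assert (Hx2 : x ^ 2 = Rabs x * Rabs x).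
  { rewrite <- Rabs_mult, Rabs_right; [ring | nra]. }
  assert (Habs : 0 < Rabs x) by (apply Rabs_pos_lt; exact Hx0).
  replace ((1 + x) ^ S m + (1 - x * (1 + eps)) ^ S m - 2)
    with ((1 + x) ^ S m + (1 - x) ^ S m - 2 + d) by (unfold d; ring).
  nra.
Qed.

Theorem mainTheorem2 :
  forall (N : nat) (I0 mu_min mu_max : R),
    (2 <= N)%nat -> 0 < I0 -> 0 < mu_min -> mu_min <= mu_max ->
    forall K : R, 0 < K ->
      exists delta : R, 0 < delta /\
        forall eps_max : R, 0 <= eps_max -> eps_max < delta ->
          forall mu1 eps : R,
            mu_min <= Rabs mu1 <= mu_max ->
            0 <= eps <= eps_max ->
            G_N N I0 K mu1 eps > 0.
Proof.
  intros N I0 mu_min mu_max HN HI0 Hmin Hminmax K HK.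
  destruct N as [|m]; [lia|].
  set (L := INR (S m) * (1 + 2 * (K * mu_max)) ^ m).
  assert (HL : 0 < L).
  { apply Rmult_lt_0_compat; [apply lt_0_INR; lia | apply pow_lt; nra]. }
  exists (Rmin 1 (2 * (K * mu_min) / L)).
  split; [apply Rmin_pos; [lra | apply Rdiv_lt_0_compat; nra]|].
  intros eps_max _ Hdelta mu1 eps Hmu Heps.
  assert (Heps1 : eps <= 1) by (pose proof (Rmin_l 1 (2 * (K * mu_min) / L)); lra).
  assert (HepsL : L * eps < 2 * (K * mu_min)).
  { pose proof (Rmin_r 1 (2 * (K * mu_min) / L)).
    apply (Rmult_lt_reg_r (/ L)); [apply Rinv_0_lt_compat; exact HL|].
    replace (L * eps * / L) with eps by (field; lra). lra. }
  assert (HKmu : Rabs (K * mu1) = K * Rabs mu1) by (rewrite Rabs_mult, Rabs_right; lra).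
  unfold G_N.
  apply Rmult_gt_0_compat; [apply Rdiv_lt_0_compat; lra|].
  apply (gain_bracket_pos _ _ (K * mu_max)).
  - lia.
  - intros Hx0. rewrite Hx0, Rabs_R0 in HKmu. nra.
  - rewrite HKmu. apply Rmult_le_compat_l; lra.
  - lra.
  - fold L. rewrite HKmu. nra.
Qed.
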